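(* Let $A$ be an associative unital algebra and $(H,\pi_l,\pi_r,\psi_l,\psi_r)$ an L-R-twisting datum for $A$. Then $A$ with the product $a\bullet b=(a_{[0]}\cdot b_{<1>})(a_{[-1]}\cdot b_{<0>})$ and the original unit $1$ is an associative unital algebra.
   Context: Work over a field $k$; $H$ an ordinary bialgebra, $\Delta(h)=h_1\otimes h_2$. An L-R-twisting datum for an algebra $A$ is a bialgebra $H$ together with: (i) an $H$-bimodule algebra structure on $A$, i.e. actions $\pi_l(h\otimes a)=h\cdot a$, $\pi_r(a\otimes h)=a\cdot h$ making $A$ an $H$-bimodule with $h\cdot(ab)=(h_1\cdot a)(h_2\cdot b)$, $(ab)\cdot h=(a\cdot h_1)(b\cdot h_2)$, $h\cdot1=1\cdot h=\varepsilon(h)1$; (ii) an $H$-bicomodule algebra structure on $A$, i.e. algebra maps $\psi_l(a)=a_{[-1]}\otimes a_{[0]}$, $\psi_r(a)=a_{<0>}\otimes a_{<1>}$ making $A$ an $H$-bicomodule; (iii) for all $h\in H$, $a\in A$: $(h\cdot a)_{[-1]}\otimes(h\cdot a)_{[0]}=a_{[-1]}\otimes h\cdot a_{[0]}$, $(h\cdot a)_{<0>}\otimes(h\cdot a)_{<1>}=h\cdot a_{<0>}\otimes a_{<1>}$, $(a\cdot h)_{[-1]}\otimes(a\cdot h)_{[0]}=a_{[-1]}\otimes a_{[0]}\cdot h$, $(a\cdot h)_{<0>}\otimes(a\cdot h)_{<1>}=a_{<0>}\cdot h\otimes a_{<1>}$. *)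

(* Tensor products are not in MathComp: an element of
   U (x) V is represented by a finite list of pairs (a finite sum of pure
   tensors), and equality of tensors is defined by the universal property:
   two such sums are equal iff every bilinear map into every k-vector space
   takes the same value on them. *)
From HB Require Import structures.
From mathcomp Require Import all_boot all_order all_algebra.
Set Implicit Arguments. Unset Strict Implicit. Unset Printing Implicit Defensive.
Import GRing.Theory.
Local Open Scope ring_scope.

Section Tensors.
Variable k : fieldType.

Definition bilin (U V W : lmodType k) (f : U -> V -> W) : Prop :=
  (forall (c : k) u u' v, f (c *: u + u') v = c *: f u v + f u' v) /\
  (forall (c : k) u v v', f u (c *: v + v') = c *: f u v + f u v').

Definition trilin (U V X W : lmodType k) (f : U -> V -> X -> W) : Prop :=
  (forall (c : k) u u' v x, f (c *: u + u') v x = c *: f u v x + f u' v x) /\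
  (forall (c : k) u v v' x, f u (c *: v + v') x = c *: f u v x + f u v' x) /\
  (forall (c : k) u v x x', f u v (c *: x + x') = c *: f u v x + f u v x').

Definition teq2 (U V : lmodType k) (t1 t2 : seq (U * V)) : Prop :=
  forall (W : lmodType k) (f : U -> V -> W), bilin f ->
    \sum_(p <- t1) f p.1 p.2 = \sum_(p <- t2) f p.1 p.2.

Definition teq3 (U V X : lmodType k) (t1 t2 : seq (U * V * X)) : Prop :=
  forall (W : lmodType k) (f : U -> V -> X -> W), trilin f ->
    \sum_(p <- t1) f p.1.1 p.1.2 p.2 = \sum_(p <- t2) f p.1.1 p.1.2 p.2.

End Tensors.

Record is_bialgebra (k : fieldType) (H : algType k)
    (Delta : H -> seq (H * H)) (eps : H -> k) : Prop := {
  bialg_Delta_lin : forall (c : k) h g,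
    teq2 (Delta (c *: h + g)) ([seq (c *: p.1, p.2) | p <- Delta h] ++ Delta g);
  bialg_eps_lin : forall (c : k) h g, eps (c *: h + g) = c * eps h + eps g;
  bialg_coassoc : forall h,
    teq3 [seq (q.1, q.2, p.2) | p <- Delta h, q <- Delta p.1]
         [seq (p.1, q.1, q.2) | p <- Delta h, q <- Delta p.2];
  bialg_counitl : forall h, \sum_(p <- Delta h) eps p.1 *: p.2 = h;
  bialg_counitr : forall h, \sum_(p <- Delta h) eps p.2 *: p.1 = h;
  bialg_Delta_mul : forall h g,
    teq2 (Delta (h * g)) [seq (p.1 * q.1, p.2 * q.2) | p <- Delta h, q <- Delta g];
  bialg_Delta_1 : teq2 (Delta 1) [:: (1, 1)];
  bialg_eps_mul : forall h g, eps (h * g) = eps h * eps g;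
  bialg_eps_1 : eps 1 = 1
}.

(* (i) A is an H-bimodule algebra via pil (h . a) and pir (a . h) *)
Record is_bimodule_algebra (k : fieldType) (H A : algType k)
    (Delta : H -> seq (H * H)) (eps : H -> k)
    (pil : H -> A -> A) (pir : A -> H -> A) : Prop := {
  bma_pil_bilin : bilin pil;
  bma_pir_bilin : bilin pir;
  bma_pil_mul : forall h g a, pil (h * g) a = pil h (pil g a);
  bma_pil_1 : forall a, pil 1 a = a;
  bma_pir_mul : forall a h g, pir a (h * g) = pir (pir a h) g;
  bma_pir_1 : forall a, pir a 1 = a;
  bma_bimod : forall h a g, pil h (pir a g) = pir (pil h a) g;
  bma_pil_alg : forall h a b,
    pil h (a * b) = \sum_(p <- Delta h) pil p.1 a * pil p.2 b;
  bma_pir_alg : forall a b h,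
    pir (a * b) h = \sum_(p <- Delta h) pir a p.1 * pir b p.2;
  bma_pil_unit : forall h, pil h 1 = eps h *: 1;
  bma_pir_unit : forall h, pir 1 h = eps h *: 1
}.

(* (ii) A is an H-bicomodule algebra via psil (a_[-1] (x) a_[0]) and
   psir (a_<0> (x) a_<1>) *)
Record is_bicomodule_algebra (k : fieldType) (H A : algType k)
    (Delta : H -> seq (H * H)) (eps : H -> k)
    (psil : A -> seq (H * A)) (psir : A -> seq (A * H)) : Prop := {
  bca_psil_lin : forall (c : k) a b,
    teq2 (psil (c *: a + b)) ([seq (c *: p.1, p.2) | p <- psil a] ++ psil b);
  bca_psir_lin : forall (c : k) a b,
    teq2 (psir (c *: a + b)) ([seq (c *: p.1, p.2) | p <- psir a] ++ psir b);
  bca_psil_coassoc : forall a,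
    teq3 [seq (q.1, q.2, p.2) | p <- psil a, q <- Delta p.1]
         [seq (p.1, q.1, q.2) | p <- psil a, q <- psil p.2];
  bca_psil_counit : forall a, \sum_(p <- psil a) eps p.1 *: p.2 = a;
  bca_psir_coassoc : forall a,
    teq3 [seq (q.1, q.2, p.2) | p <- psir a, q <- psir p.1]
         [seq (p.1, q.1, q.2) | p <- psir a, q <- Delta p.2];
  bca_psir_counit : forall a, \sum_(p <- psir a) eps p.2 *: p.1 = a;
  bca_bicomod : forall a,
    teq3 [seq (q.1, q.2, p.2) | p <- psir a, q <- psil p.1]
         [seq (p.1, q.1, q.2) | p <- psil a, q <- psir p.2];
  bca_psil_mul : forall a b,
    teq2 (psil (a * b)) [seq (p.1 * q.1, p.2 * q.2) | p <- psil a, q <- psil b];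
  bca_psil_1 : teq2 (psil 1) [:: (1, 1)];
  bca_psir_mul : forall a b,
    teq2 (psir (a * b)) [seq (p.1 * q.1, p.2 * q.2) | p <- psir a, q <- psir b];
  bca_psir_1 : teq2 (psir 1) [:: (1, 1)]
}.

Record LR_twisting_datum (k : fieldType) (H A : algType k)
    (Delta : H -> seq (H * H)) (eps : H -> k)
    (pil : H -> A -> A) (pir : A -> H -> A)
    (psil : A -> seq (H * A)) (psir : A -> seq (A * H)) : Prop := {
  lr_bialg : is_bialgebra Delta eps;
  lr_bimod : is_bimodule_algebra Delta eps pil pir;
  lr_bicomod : is_bicomodule_algebra Delta eps psil psir;
  lr_psil_pil : forall h a,
    teq2 (psil (pil h a)) [seq (p.1, pil h p.2) | p <- psil a];
  lr_psir_pil : forall h a,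
    teq2 (psir (pil h a)) [seq (pil h p.1, p.2) | p <- psir a];
  lr_psil_pir : forall a h,
    teq2 (psil (pir a h)) [seq (p.1, pir p.2 h) | p <- psil a];
  lr_psir_pir : forall a h,
    teq2 (psir (pir a h)) [seq (pir p.1 h, p.2) | p <- psir a]
}.

Definition LR_prod (k : fieldType) (H A : algType k)
    (pil : H -> A -> A) (pir : A -> H -> A)
    (psil : A -> seq (H * A)) (psir : A -> seq (A * H)) (a b : A) : A :=
  \sum_(p <- psil a) \sum_(q <- psir b) pir p.2 q.2 * pil p.1 q.1.

(* Expanding a • (b • c), the coaction psir is multiplicative and commutes
   with both actions, so the inner product can be pulled through it; expanding
   (a • b) • c, the same holds for psil.  The coassociativity of psil and psir
   and the bicomodule condition bring the two resulting sixfold Sweedler sums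
   to the common normal form [LR_prod3].  The unit laws are the counit axioms
   of the coactions together with h . 1 = 1 . h = eps h 1. *)

Set Warnings "-notation-overridden -ambiguous-paths".
From HB Require Import structures.
From mathcomp Require Import all_boot all_order all_algebra.
Import GRing.Theory.
Local Open Scope ring_scope.
Set Implicit Arguments. Unset Strict Implicit. Unset Printing Implicit Defensive.

Section LinearMaps.
Variable k : fieldType.
Implicit Types U V X Y W : lmodType k.

Lemma linear_fun0 U W (f : U -> W) : linear f -> f 0 = 0.
Proof.
move=> Hf; have := Hf 1 0 0; rewrite !scale1r addr0 => E.
by apply: (addrI (f 0)); rewrite addr0 -E.
Qed.

Lemma linear_funZ U W (f : U -> W) c u : linear f -> f (c *: u) = c *: f u.
Proof. by move=> Hf; have := Hf c u 0; rewrite !addr0 (linear_fun0 Hf) addr0. Qed.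

Lemma linear_fun_sum U W (f : U -> W) I (s : seq I) (F : I -> U) :
  linear f -> f (\sum_(i <- s) F i) = \sum_(i <- s) f (F i).
Proof.
move=> Hf; elim: s => [|i s IH]; first by rewrite !big_nil (linear_fun0 Hf).
have fD u v : f (u + v) = f u + f v by have := Hf 1 u v; rewrite !scale1r.
by rewrite !big_cons fD IH.
Qed.

Lemma linear_id U : linear (fun u : U => u).
Proof. by []. Qed.

Lemma linear_sum_fun U W I (s : seq I) (F : U -> I -> W) :
  (forall i, linear (F^~ i)) -> linear (fun u => \sum_(i <- s) F u i).
Proof.
move=> HF c u v; rewrite scaler_sumr -big_split; apply: eq_bigr => i _.
exact: HF.
Qed.

Lemma linear_mull U (R : lalgType k) (g : U -> R) (y : R) :
  linear g -> linear (fun u => g u * y).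
Proof. by move=> Hg c u v /=; rewrite Hg mulrDl scalerAl. Qed.

Lemma linear_mulr U (R : algType k) (g : U -> R) (y : R) :
  linear g -> linear (fun u => y * g u).
Proof. by move=> Hg c u v /=; rewrite Hg mulrDr scalerAr. Qed.

Lemma bilin_linearl U X Y W (f : X -> Y -> W) (g : U -> X) y :
  bilin f -> linear g -> linear (fun u => f (g u) y).
Proof. by move=> [fl _] Hg c u v /=; rewrite Hg fl. Qed.

Lemma bilin_linearr U X Y W (f : X -> Y -> W) (g : U -> Y) x :
  bilin f -> linear g -> linear (fun u => f x (g u)).
Proof. by move=> [_ fr] Hg c u v /=; rewrite Hg fr. Qed.

Lemma bilinP X Y W (f : X -> Y -> W) :
  (forall y, linear (f^~ y)) -> (forall x, linear (f x)) -> bilin f.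
Proof. by move=> fl fr; split=> c u u' v; [apply: fl | apply: fr]. Qed.

Lemma trilinP X Y V W (f : X -> Y -> V -> W) :
  (forall y z, linear (fun x => f x y z)) ->
  (forall x z, linear (fun y => f x y z)) ->
  (forall x y, linear (f x y)) -> trilin f.
Proof.
move=> f1 f2 f3; split; first by move=> c u u' y z; apply: f1.
by split=> c x *; [apply: f2 | apply: f3].
Qed.

End LinearMaps.

Ltac linearity :=
  try (first [apply: trilinP | apply: bilinP]; intros);
  repeat first [ exact: linear_id
               | apply: linear_sum_fun => ?
               | apply: linear_mull
               | apply: linear_mulr
               | match goal with Hf : bilin _ |- _ =>
                   first [apply: (bilin_linearl _ Hf) | apply: (bilin_linearr _ Hf)]
                 end ].

Section TensorSums.
Variable k : fieldType.
Implicit Types U X Y Z W : lmodType k.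

Definition tlinear U X Y (ps : U -> seq (X * Y)) : Prop :=
  forall c a b, teq2 (ps (c *: a + b)) ([seq (c *: p.1, p.2) | p <- ps a] ++ ps b).

Lemma linear_tsum U X Y W (ps : U -> seq (X * Y)) (f : X -> Y -> W) :
  tlinear ps -> bilin f -> linear (fun u => \sum_(p <- ps u) f p.1 p.2).
Proof.
move=> Hps Hf c a b; rewrite (Hps c a b _ f Hf) big_cat big_map /= scaler_sumr.
congr (_ + _); apply: eq_bigr => p _.
by apply: (linear_funZ (f := f^~ p.2)); linearity.
Qed.

Lemma tsum_sum U X Y W (ps : U -> seq (X * Y)) (f : X -> Y -> W)
    I (s : seq I) (F : I -> U) :
  tlinear ps -> bilin f ->
  \sum_(p <- ps (\sum_(i <- s) F i)) f p.1 p.2 =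
    \sum_(i <- s) \sum_(p <- ps (F i)) f p.1 p.2.
Proof. by move=> Hps Hf; exact: (linear_fun_sum _ _ (linear_tsum Hps Hf)). Qed.

Lemma tsum_mul (U X Y : algType k) W (ps : U -> seq (X * Y)) (f : X -> Y -> W) x y :
  teq2 (ps (x * y)) [seq (p.1 * q.1, p.2 * q.2) | p <- ps x, q <- ps y] ->
  bilin f ->
  \sum_(p <- ps (x * y)) f p.1 p.2 =
    \sum_(p <- ps x) \sum_(q <- ps y) f (p.1 * q.1) (p.2 * q.2).
Proof. by move=> E Hf; rewrite (E _ f Hf) big_allpairs_dep. Qed.

(* The shape shared by all coassociativity and bicomodule axioms. *)
Lemma coassoc_sum (P Q : Type) X Y Z W (s : seq (P * Z)) (t : P -> seq (X * Y))
    (s' : seq (X * Q)) (t' : Q -> seq (Y * Z)) (f : X -> Y -> Z -> W) :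
  teq3 [seq (q.1, q.2, p.2) | p <- s, q <- t p.1]
       [seq (p.1, q.1, q.2) | p <- s', q <- t' p.2] ->
  trilin f ->
  \sum_(p <- s) \sum_(q <- t p.1) f q.1 q.2 p.2 =
    \sum_(p <- s') \sum_(q <- t' p.2) f p.1 q.1 q.2.
Proof. by move=> E Hf; have := E _ f Hf; rewrite !big_allpairs_dep. Qed.

End TensorSums.

Section LRTwistedProduct.
Variables (k : fieldType) (H A : algType k).
Variables (Delta : H -> seq (H * H)) (eps : H -> k).
Variables (pil : H -> A -> A) (pir : A -> H -> A).
Variables (psil : A -> seq (H * A)) (psir : A -> seq (A * H)).
Hypothesis D : LR_twisting_datum Delta eps pil pir psil psir.

Let BM := lr_bimod D.
Let BC := lr_bicomod D.
Let pilB : bilin pil := bma_pil_bilin BM.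
Let pirB : bilin pir := bma_pir_bilin BM.

Local Notation "a • b" := (LR_prod pil pir psil psir a b) (at level 40).

Lemma LR_prod_bilin : bilin (LR_prod pil pir psil psir).
Proof.
apply: bilinP => [b|a].
  by apply: (linear_tsum (bca_psil_lin BC)
    (f := fun h x => \sum_(q <- psir b) pir x q.2 * pil h q.1)); linearity.
apply: linear_sum_fun => p.
by apply: (linear_tsum (bca_psir_lin BC) (f := fun x h => pir p.2 h * pil p.1 x));
  linearity.
Qed.

Lemma LR_prod1x : left_id 1 (LR_prod pil pir psil psir).
Proof.
move=> b; rewrite /LR_prod.
rewrite (bca_psil_1 BC (f := fun h x => \sum_(q <- psir b) pir x q.2 * pil h q.1));
  last by linearity.
rewrite big_seq1 /= -[RHS](bca_psir_counit BC); apply: eq_bigr => q _.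
by rewrite (bma_pir_unit BM) (bma_pil_1 BM) -scalerAl mul1r.
Qed.

Lemma LR_prodx1 : right_id 1 (LR_prod pil pir psil psir).
Proof.
move=> a; rewrite /LR_prod -[RHS](bca_psil_counit BC); apply: eq_bigr => p _.
rewrite (bca_psir_1 BC (f := fun x h => pir p.2 h * pil p.1 x)) ?big_seq1 /=;
  last by linearity.
by rewrite (bma_pir_1 BM) (bma_pil_unit BM) -scalerAr mulr1.
Qed.

(* In Sweedler notation the summand is
   (a_[0] . b_[0]<1> c_<0><1>) (a_[-1](1) . b_[0]<0> . c_<1>)
   (a_[-1](2) . b_[-1] . c_<0><0>). *)
Definition LR_prod3 (a b c : A) : A :=
  \sum_(p <- psil a) \sum_(e <- Delta p.1) \sum_(w <- psil b) \sum_(z <- psir w.2)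
  \sum_(Q <- psir c) \sum_(y <- psir Q.1)
    pir p.2 (z.2 * y.2) * pil e.1 (pir z.1 Q.2) * pil e.2 (pil w.1 y.1).

Lemma LR_prod_assocr a b c : a • (b • c) = LR_prod3 a b c.
Proof.
rewrite /LR_prod /LR_prod3; apply: eq_bigr => p _.
have fB : bilin (fun x h => pir p.2 h * pil p.1 x) by linearity.
rewrite (tsum_sum _ _ (bca_psir_lin BC) fB).
under eq_bigr => w _ do rewrite (tsum_sum _ _ (bca_psir_lin BC) fB).
under eq_bigr => w _ do under eq_bigr => Q _ do
  rewrite (tsum_mul (bca_psir_mul BC _ _) fB).
transitivity (\sum_(w <- psil b) \sum_(Q <- psir c) \sum_(z <- psir w.2)
  \sum_(y <- psir Q.1) \sum_(e <- Delta p.1)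
    pir p.2 (z.2 * y.2) * pil e.1 (pir z.1 Q.2) * pil e.2 (pil w.1 y.1)).
  apply: eq_bigr => w _; apply: eq_bigr => Q _.
  rewrite (lr_psir_pir D w.2 Q.2 (f := fun x h => \sum_(y <- psir (pil w.1 Q.1))
    pir p.2 (h * y.2) * pil p.1 (x * y.1))); last by linearity.
  rewrite big_map; apply: eq_bigr => z _ /=.
  rewrite (lr_psir_pil D w.1 Q.1 (f := fun x h =>
    pir p.2 (z.2 * h) * pil p.1 (pir z.1 Q.2 * x))); last by linearity.
  rewrite big_map; apply: eq_bigr => y _ /=.
  by rewrite (bma_pil_alg BM) mulr_sumr; apply: eq_bigr => e _; rewrite mulrA.
under eq_bigr => w _ do under eq_bigr => Q _ do under eq_bigr => z _ do
  rewrite exchange_big.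
under eq_bigr => w _ do under eq_bigr => Q _ do rewrite exchange_big.
under eq_bigr => w _ do rewrite exchange_big.
rewrite exchange_big; apply: eq_bigr => e _; apply: eq_bigr => w _.
by rewrite exchange_big.
Qed.

Lemma LR_prod3_coassoc a b c :
  LR_prod3 a b c =
  \sum_(p <- psil a) \sum_(q <- psir b) \sum_(u <- psil p.2) \sum_(v <- psil q.1)
  \sum_(Q <- psir c) \sum_(d <- Delta Q.2)
    pir u.2 (q.2 * d.1) * pil p.1 (pir v.2 d.2) * pil u.1 (pil v.1 Q.1).
Proof.
rewrite /LR_prod3 (coassoc_sum (bca_psil_coassoc BC a) (f := fun h h' x =>
  \sum_(w <- psil b) \sum_(z <- psir w.2) \sum_(Q <- psir c) \sum_(y <- psir Q.1)
    pir x (z.2 * y.2) * pil h (pir z.1 Q.2) * pil h' (pil w.1 y.1)));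
  last by linearity.
apply: eq_bigr => p _; rewrite [RHS]exchange_big; apply: eq_bigr => u _.
rewrite -(coassoc_sum (bca_bicomod BC b) (f := fun h x h' =>
  \sum_(Q <- psir c) \sum_(y <- psir Q.1)
    pir u.2 (h' * y.2) * pil p.1 (pir x Q.2) * pil u.1 (pil h y.1)));
  last by linearity.
apply: eq_bigr => q _; apply: eq_bigr => v _.
by rewrite (coassoc_sum (bca_psir_coassoc BC c) (f := fun x h h' =>
  pir u.2 (q.2 * h) * pil p.1 (pir v.2 h') * pil u.1 (pil v.1 x))) //; linearity.
Qed.

Lemma LR_prod_assocl a b c : (a • b) • c = LR_prod3 a b c.
Proof.
rewrite LR_prod3_coassoc /LR_prod.
have FB : bilin (fun h x => \sum_(Q <- psir c) pir x Q.2 * pil h Q.1) by linearity.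
rewrite (tsum_sum _ _ (bca_psil_lin BC) FB).
under eq_bigr => p _ do rewrite (tsum_sum _ _ (bca_psil_lin BC) FB).
under eq_bigr => p _ do under eq_bigr => q _ do
  rewrite (tsum_mul (bca_psil_mul BC _ _) FB).
apply: eq_bigr => p _; apply: eq_bigr => q _.
rewrite (lr_psil_pir D p.2 q.2 (f := fun h x => \sum_(v <- psil (pil p.1 q.1))
  \sum_(Q <- psir c) pir (x * v.2) Q.2 * pil (h * v.1) Q.1)); last by linearity.
rewrite big_map; apply: eq_bigr => u _ /=.
rewrite (lr_psil_pil D p.1 q.1 (f := fun h x => \sum_(Q <- psir c)
  pir (pir u.2 q.2 * x) Q.2 * pil (u.1 * h) Q.1)); last by linearity.
rewrite big_map; apply: eq_bigr => v _ /=; apply: eq_bigr => Q _.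
rewrite (bma_pir_alg BM) (bma_pil_mul BM) mulr_suml; apply: eq_bigr => d _.
by rewrite -(bma_pir_mul BM) (bma_bimod BM).
Qed.

Lemma LR_prodA : associative (LR_prod pil pir psil psir).
Proof. by move=> a b c; rewrite LR_prod_assocr LR_prod_assocl. Qed.

End LRTwistedProduct.

Theorem proposition4p2 (k : fieldType) (H A : algType k)
    (Delta : H -> seq (H * H)) (eps : H -> k)
    (pil : H -> A -> A) (pir : A -> H -> A)
    (psil : A -> seq (H * A)) (psir : A -> seq (A * H)) :
  LR_twisting_datum Delta eps pil pir psil psir ->
  let bullet := LR_prod pil pir psil psir in
  bilin (bullet : A -> A -> A) /\
  associative bullet /\ left_id 1 bullet /\ right_id 1 bullet.
Proof.
move=> D bullet.
split; first exact: LR_prod_bilin D.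
split; first exact: LR_prodA D.
by split; [exact: LR_prod1x D | exact: LR_prodx1 D].
Qed.
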